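(* Assume $0<a,b<1$, $r>2$, $s>2$, $r>as$, $s>br$. Let $\underline\alpha\in(\tilde\alpha,1)$, $\underline\beta\in(\tilde\beta,1)$, $\bar\alpha\in(\underline\alpha,1)$, $\bar\beta\in(\underline\beta,1)$, $h\in(0,\min\{\underline c_1(\underline\alpha,\underline\beta),\underline c_2(\underline\alpha,\underline\beta)\})$. Let $(\alpha_n)_{n\in\mathbb N}$, $(\beta_n)_{n\in\mathbb N}$ satisfy $\alpha_n\in(\underline\alpha,\bar\alpha)$, $\beta_n\in(\underline\beta,\bar\beta)$ for all $n$, and let $(x_n,y_n)$ solve $$x_{n+1}=x_n[(1-\alpha_{n+1})e^{r-x_n-ay_n}+\alpha_{n+1}],\quad y_{n+1}=y_n[(1-\beta_{n+1})e^{s-bx_n-y_n}+\beta_{n+1}],\quad n\in\mathbb N_0,$$ with $x_0,y_0>0$. Then: (a) if $(x_0,y_0)\in D_{\underline\alpha,\underline\beta}$ then $(x_n,y_n)\in D_{\underline\alpha,\underline\beta}$ for all $n\in\mathbb N$; (b) if $(x_0,y_0)\in D_{\underline\alpha,\underline\beta}(h)$ then $(x_n,y_n)\in D_{\underline\alpha,\underline\beta}(h)$ for all $n\in\mathbb N$; (c) if $(x_0,y_0)\notin D_{\underline\alpha,\underline\beta}(h)$, there is $\tilde S=\tilde S(x_0,y_0,\underline\alpha,\underline\beta,\bar\alpha,\bar\beta,h)\in\mathbb N$ (not depending on the particular sequences $\alpha_n,\beta_n$) such that $(x_n,y_n)\in D_{\underline\alpha,\underline\beta}(h)$ for all $n\ge\tilde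 S$.
   Context: Let $f(\alpha,x,y)=x[(1-\alpha)e^{r-x-ay}+\alpha]$, $g(\beta,x,y)=y[(1-\beta)e^{s-bx-y}+\beta]$. Define $\mathcal H_1(\alpha)=\max\{(1-\alpha)e^{r-1}+2\alpha,\,r\}$, $\mathcal H_2(\beta)=\max\{(1-\beta)e^{s-1}+2\beta,\,s\}$, $c_1(\beta)=r-a\mathcal H_2(\beta)$, $c_2(\alpha)=s-b\mathcal H_1(\alpha)$, $\tilde\alpha=\max\{\frac{e^{r-1}-s/b}{e^{r-1}-2},0\}$, $\tilde\beta=\max\{\frac{e^{s-1}-r/a}{e^{s-1}-2},0\}$. For $\alpha\in(\tilde\alpha,1)$, $\beta\in(\tilde\beta,1)$: $\underline c_1(\alpha,\beta)=\min\{f(\alpha,x,y):x\in[c_1(\beta),\mathcal H_1(\alpha)],y\in[0,\mathcal H_2(\beta)]\}$, $\underline c_2(\alpha,\beta)=\min\{g(\beta,x,y):x\in[0,\mathcal H_1(\alpha)],y\in[c_2(\alpha),\mathcal H_2(\beta)]\}$, $D_{\alpha,\beta}=[\underline c_1(\alpha,\beta),\mathcal H_1(\alpha)]\times[\underline c_2(\alpha,\beta),\mathcal H_2(\beta)]$, $D_{\alpha,\beta}(h)=[\underline c_1(\alpha,\beta)-h,\mathcal H_1(\alpha)]\times[\underline c_2(\alpha,\beta)-h,\mathcal H_2(\beta)]$. *)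

From Stdlib Require Import Reals Lra ClassicalEpsilon.
Open Scope R_scope.

Definition fmap (r a al x y : R) : R := x * ((1 - al) * exp (r - x - a * y) + al).
Definition gmap (s b be x y : R) : R := y * ((1 - be) * exp (s - b * x - y) + be).

Definition H1 (r al : R) : R := Rmax ((1 - al) * exp (r - 1) + 2 * al) r.
Definition H2 (s be : R) : R := Rmax ((1 - be) * exp (s - 1) + 2 * be) s.
Definition c1 (a r s be : R) : R := r - a * H2 s be.
Definition c2 (b r s al : R) : R := s - b * H1 r al.
Definition alpha_t (b r s : R) : R := Rmax ((exp (r - 1) - s / b) / (exp (r - 1) - 2)) 0.
Definition beta_t (a r s : R) : R := Rmax ((exp (s - 1) - r / a) / (exp (s - 1) - 2)) 0.

Definition is_rect_min (F : R -> R -> R) (x1 x2 y1 y2 m : R) : Prop :=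
  (exists x y, x1 <= x <= x2 /\ y1 <= y <= y2 /\ F x y = m) /\
  (forall x y, x1 <= x <= x2 -> y1 <= y <= y2 -> m <= F x y).

(* min{F(x,y) : (x,y) in rectangle}, chosen by Hilbert's epsilon
   (the minimum exists for the continuous F's used below on nonempty compact rectangles). *)
Definition rect_min (F : R -> R -> R) (x1 x2 y1 y2 : R) : R :=
  epsilon (inhabits 0) (is_rect_min F x1 x2 y1 y2).

Definition c1lo (a b r s al be : R) : R :=
  rect_min (fun x y => fmap r a al x y) (c1 a r s be) (H1 r al) 0 (H2 s be).
Definition c2lo (a b r s al be : R) : R :=
  rect_min (fun x y => gmap s b be x y) 0 (H1 r al) (c2 b r s al) (H2 s be).

(* (x,y) in D_{al,be}(h); D_{al,be} = D_{al,be}(0) *)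
Definition inD (a b r s al be h x y : R) : Prop :=
  c1lo a b r s al be - h <= x <= H1 r al /\ c2lo a b r s al be - h <= y <= H2 s be.

Definition is_solution (a b r s : R) (alpha beta x y : nat -> R) : Prop :=
  forall n : nat,
    x (S n) = fmap r a (alpha (S n)) (x n) (y n) /\
    y (S n) = gmap s b (beta (S n)) (x n) (y n).

Definition admissible_seqs (al_lo al_hi be_lo be_hi : R) (alpha beta : nat -> R) : Prop :=
  forall n : nat, (1 <= n)%nat ->
    al_lo < alpha n < al_hi /\ be_lo < beta n < be_hi.

(* With psi(x) = x ((1 - al) e^(r - x) + al): since x e^(r - x) <= e^(r - 1), and
   x e^(r - x) is convex on [2, oo) and hence below its chord on [2, r], psi(x) never exceeds
   max(H1, x).  So the upper edges of the box are invariant.  For the lower edges: when the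
   exponent r - x - a y is nonnegative the iterate does not decrease, and when it is negative
   the point lies in the rectangle [c1, H1] x [0, H2], where f is increasing in al and hence
   bounded below by its minimum c1lo at the smallest rate.
   Entry into D(h) happens in four stages per coordinate, each lasting a number of steps
   bounded in terms of the initial point and the rate bounds only: above any T > H1 the
   iterate contracts geometrically; once the other coordinate is below such a T, the iterate
   stays above a positive constant; the other coordinate being bounded below, the iterate
   decreases linearly down to H1; finally, below c1lo - h the exponent is at least h, so the
   iterate grows by a fixed factor greater than 1 until it reaches c1lo - h. *)

From Pilot Require Import Defs.
From Stdlib Require Import Reals Lra Lia Psatz ClassicalEpsilon.
From Coquelicot Require Import Coquelicot.
Open Scope R_scope.

Lemma exp_le_compat (u v : R) : u <= v -> exp u <= exp v.
Proof. intros [H|H]; [left; apply exp_increasing; auto | subst; lra]. Qed.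

Lemma exp_ge_1 (u : R) : 0 <= u -> 1 <= exp u.
Proof. intros. pose proof (exp_ineq1_le u). lra. Qed.

Lemma exp_le_1 (u : R) : u <= 0 -> exp u <= 1.
Proof. intros. rewrite <- exp_0. apply exp_le_compat; lra. Qed.

Lemma exp_gt_1 (u : R) : 0 < u -> 1 < exp u.
Proof. intros. rewrite <- exp_0. apply exp_increasing; lra. Qed.

Lemma exp_lt_1 (u : R) : u < 0 -> exp u < 1.
Proof. intros. rewrite <- exp_0. apply exp_increasing; lra. Qed.

Lemma xexp_le (r x : R) : x * exp (r - x) <= exp (r - 1).
Proof.
  replace (r - 1) with ((r - x) + (x - 1)) by ring. rewrite exp_plus.
  pose proof (exp_ineq1_le (x - 1)). pose proof (exp_pos (r - x)). nra.
Qed.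

Lemma xexp_derive (r c : R) :
  derivable_pt_lim (fun t => t * exp (r - t)) c ((1 - c) * exp (r - c)).
Proof.
  apply is_derive_Reals. auto_derive; auto.
  replace (r + - c) with (r - c) by ring. ring.
Qed.

Lemma xexp_derive_mono (r c1 c2 : R) : 2 <= c1 <= c2 ->
  (1 - c1) * exp (r - c1) <= (1 - c2) * exp (r - c2).
Proof.
  intros Hc.
  replace (r - c1) with ((r - c2) + (c2 - c1)) by ring. rewrite exp_plus.
  pose proof (exp_ineq1_le (c2 - c1)). pose proof (exp_pos (r - c2)).
  assert ((c2 - 1) <= (c1 - 1) * exp (c2 - c1)) by nra.
  nra.
Qed.

Lemma xexp_below_chord (r x : R) : 2 < x < r ->
  x * exp (r - x) * (r - 2) <= r * (x - 2) + 2 * exp (r - 2) * (r - x).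
Proof.
  intros [Hx2 Hxr].
  destruct (MVT_cor2 (fun t => t * exp (r - t)) (fun c => (1 - c) * exp (r - c)) 2 x Hx2)
    as [c1 [E1 Hc1]]; [intros; apply xexp_derive|].
  destruct (MVT_cor2 (fun t => t * exp (r - t)) (fun c => (1 - c) * exp (r - c)) x r Hxr)
    as [c2 [E2 Hc2]]; [intros; apply xexp_derive|].
  simpl in E1, E2. rewrite Rminus_diag, exp_0 in E2.
  pose proof (xexp_derive_mono r c1 c2 ltac:(lra)).
  set (d1 := (1 - c1) * exp (r - c1)) in *.
  set (d2 := (1 - c2) * exp (r - c2)) in *.
  assert (d1 * (x - 2) * (r - x) <= d2 * (r - x) * (x - 2))
    by (assert (0 <= (x - 2) * (r - x)) by nra; nra).
  nra.
Qed.

Lemma H1_ge_r (r al : R) : r <= H1 r al.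
Proof. apply Rmax_r. Qed.

Lemma H1_antimono (r al1 al2 : R) : r > 2 -> al1 <= al2 -> H1 r al2 <= H1 r al1.
Proof.
  intros Hr Hal. unfold H1.
  pose proof (exp_ineq1_le (r - 1)).
  apply Rmax_lub; [|apply Rmax_r].
  eapply Rle_trans; [|apply Rmax_l]. nra.
Qed.

Lemma xexp_mix_le_Rmax_H1 (r al x : R) : r > 2 -> 0 <= al < 1 -> 0 <= x ->
  x * ((1 - al) * exp (r - x) + al) <= Rmax (H1 r al) x.
Proof.
  intros Hr Hal Hx.
  set (A := (1 - al) * exp (r - 1) + 2 * al).
  set (M := Rmax (H1 r al) x).
  assert (HA : A <= M) by (eapply Rle_trans; [apply Rmax_l|apply Rmax_l]).
  assert (HR : r <= M) by (eapply Rle_trans; [apply H1_ge_r|apply Rmax_l]).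
  assert (HX : x <= M) by apply Rmax_r.
  pose proof (xexp_le r x).
  destruct (Rle_lt_dec x 2) as [Hx2|Hx2].
  { assert ((1 - al) * (x * exp (r - x)) <= (1 - al) * exp (r - 1))
      by (apply Rmult_le_compat_l; lra).
    unfold A in HA. nra. }
  destruct (Rle_lt_dec r x) as [Hxr|Hxr].
  { pose proof (exp_le_1 (r - x) ltac:(lra)).
    assert ((1 - al) * exp (r - x) + al <= 1) by nra. nra. }
  assert (He : 2 * exp (r - 2) <= exp (r - 1)).
  { replace (r - 1) with ((r - 2) + 1) by ring. rewrite exp_plus.
    pose proof (exp_ineq1_le 1). pose proof (exp_pos (r - 2)). nra. }
  pose proof (xexp_below_chord r x (conj Hx2 Hxr)).
  assert (x * exp (r - x) * (r - 2) <= r * (x - 2) + exp (r - 1) * (r - x)) by nra.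
  (* psi(x) is below the convex combination of A (at x = 2) and r (at x = r) *)
  assert (x * ((1 - al) * exp (r - x) + al) * (r - 2) <= (r - x) * A + (x - 2) * r)
    by (unfold A; nra).
  apply (Rmult_le_reg_r (r - 2)); nra.
Qed.

Lemma gmap_fmap (s b be x y : R) : gmap s b be x y = fmap s b be y x.
Proof. unfold gmap, fmap. replace (s - b * x - y) with (s - y - b * x) by ring. ring. Qed.

Lemma fmap_le_Rmax_H1 (r a al_lo al x y : R) : r > 2 -> 0 <= a -> 0 <= al_lo <= al ->
  al < 1 -> 0 <= x -> 0 <= y -> fmap r a al x y <= Rmax (H1 r al_lo) x.
Proof.
  intros Hr Ha Hal Hal1 Hx Hy. unfold fmap.
  assert (exp (r - x - a * y) <= exp (r - x)) by (apply exp_le_compat; nra).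
  assert (x * ((1 - al) * exp (r - x - a * y) + al) <= x * ((1 - al) * exp (r - x) + al))
    by (apply Rmult_le_compat_l; nra).
  pose proof (xexp_mix_le_Rmax_H1 r al x Hr ltac:(lra) Hx).
  pose proof (Rle_max_compat_r _ _ x (H1_antimono r al_lo al Hr (proj2 Hal))).
  lra.
Qed.

Lemma fmap_ge_growth (r a al al_hi d x y : R) : 0 <= x -> 0 <= d <= r - x - a * y ->
  0 <= al <= al_hi -> al_hi < 1 -> ((1 - al_hi) * exp d + al_hi) * x <= fmap r a al x y.
Proof.
  intros Hx Hd Hal Hal1. unfold fmap.
  pose proof (exp_le_compat _ _ (proj2 Hd)). pose proof (exp_ge_1 _ (proj1 Hd)).
  rewrite (Rmult_comm _ x). apply Rmult_le_compat_l; nra.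
Qed.

Lemma fmap_ge_self (r a al x y : R) : 0 <= x -> 0 <= r - x - a * y -> 0 <= al < 1 ->
  x <= fmap r a al x y.
Proof.
  intros Hx He Hal.
  pose proof (fmap_ge_growth r a al al 0 x y Hx ltac:(lra) ltac:(lra) ltac:(lra)).
  rewrite exp_0 in H. lra.
Qed.

Lemma fmap_ge_scale (r a al_lo al x y : R) : 0 <= x -> 0 <= al_lo <= al -> al < 1 ->
  al_lo * x <= fmap r a al x y.
Proof.
  intros. unfold fmap. pose proof (exp_pos (r - x - a * y)).
  assert (0 <= x * ((1 - al) * exp (r - x - a * y))) by (apply Rmult_le_pos; nra).
  nra.
Qed.

Lemma fmap_le_contract (r a al al_hi T x y : R) : 0 <= a -> 0 <= y -> 0 <= r -> r <= T <= x ->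
  0 <= al <= al_hi -> al_hi < 1 -> fmap r a al x y <= ((1 - al_hi) * exp (r - T) + al_hi) * x.
Proof.
  intros. unfold fmap.
  assert (exp (r - x - a * y) <= exp (r - T)) by (apply exp_le_compat; nra).
  pose proof (exp_le_1 (r - T) ltac:(lra)). pose proof (exp_pos (r - x - a * y)).
  assert ((1 - al) * exp (r - x - a * y) + al <= (1 - al_hi) * exp (r - T) + al_hi) by nra.
  rewrite (Rmult_comm _ x). apply Rmult_le_compat_l; lra.
Qed.

Lemma fmap_le_decrease (r a al al_hi m x y : R) : 0 <= a -> 0 <= m <= y -> 0 < r <= x ->
  0 <= al <= al_hi -> al_hi < 1 -> fmap r a al x y <= x - r * (1 - al_hi) * (1 - exp (- (a * m))).
Proof.
  intros. unfold fmap.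
  assert (exp (r - x - a * y) <= exp (- (a * m))) by (apply exp_le_compat; nra).
  pose proof (exp_le_1 (- (a * m)) ltac:(nra)). pose proof (exp_pos (r - x - a * y)).
  assert (r * ((1 - al_hi) * (1 - exp (- (a * m))))
          <= x * ((1 - al) * (1 - exp (r - x - a * y)))) by (apply Rmult_le_compat; nra).
  nra.
Qed.

(* With a nonnegative exponent f does not decrease x; with a negative one, x > r - a Hy puts
   (x, y) in the rectangle, and there f is increasing in the rate. *)
Lemma fmap_ge_of_rect_bound (r a al_lo al Hx Hy mlo L x y : R) :
  (forall x y, r - a * Hy <= x <= Hx -> 0 <= y <= Hy -> mlo <= fmap r a al_lo x y) ->
  0 <= a -> 0 <= al_lo <= al -> al < 1 -> 0 <= L <= mlo ->
  L <= x <= Hx -> 0 <= y <= Hy -> L <= fmap r a al x y.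
Proof.
  intros Hm Ha Hal Hal1 HL Hxb Hyb.
  destruct (Rle_lt_dec 0 (r - x - a * y)) as [E|E].
  - pose proof (fmap_ge_self r a al x y ltac:(lra) E ltac:(lra)). lra.
  - pose proof (Hm x y ltac:(nra) Hyb).
    pose proof (exp_le_1 _ (Rlt_le _ _ E)).
    assert (fmap r a al_lo x y <= fmap r a al x y)
      by (unfold fmap; apply Rmult_le_compat_l; nra).
    lra.
Qed.

Lemma fmap_zero_exponent (r a al x y : R) : r - x - a * y = 0 -> fmap r a al x y = x.
Proof. intros E. unfold fmap. rewrite E, exp_0. ring. Qed.

Lemma fmap_continuous_x (r a al y c : R) : continuity_pt (fun x => fmap r a al x y) c.
Proof.
  apply derivable_continuous_pt. eexists. apply is_derive_Reals. unfold fmap.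
  auto_derive; [auto | reflexivity].
Qed.

(* f is nonincreasing in y, so the minimum is taken on the edge y = Hy. *)
Lemma fmap_rect_min_exists (r a al cl Hx Hy : R) : 0 <= a -> 0 < cl <= Hx -> 0 <= Hy ->
  0 <= al < 1 -> exists m, is_rect_min (fun x y => fmap r a al x y) cl Hx 0 Hy m.
Proof.
  intros Ha Hc HHy Hal.
  destruct (continuity_ab_min (fun x => fmap r a al x Hy) cl Hx ltac:(lra)
     (fun c _ => fmap_continuous_x r a al Hy c)) as [xm [Hmin Hxm]].
  exists (fmap r a al xm Hy). split.
  - exists xm, Hy. repeat split; lra.
  - intros x y Hx1 Hy1. apply Rle_trans with (fmap r a al x Hy); [apply Hmin; auto|].
    unfold fmap.
    assert (exp (r - x - a * Hy) <= exp (r - x - a * y)) by (apply exp_le_compat; nra).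
    apply Rmult_le_compat_l; nra.
Qed.

Lemma is_rect_min_swap (F G : R -> R -> R) (x1 x2 y1 y2 m : R) :
  (forall x y, G x y = F y x) -> is_rect_min F x1 x2 y1 y2 m -> is_rect_min G y1 y2 x1 x2 m.
Proof.
  intros HGF [[x [y [Hx [Hy Hm]]]] Hle]. split.
  - exists y, x. rewrite HGF. auto.
  - intros u v Hu Hv. rewrite HGF. auto.
Qed.

Lemma rect_min_le (F : R -> R -> R) (x1 x2 y1 y2 : R) :
  (exists m, is_rect_min F x1 x2 y1 y2 m) ->
  forall x y, x1 <= x <= x2 -> y1 <= y <= y2 -> rect_min F x1 x2 y1 y2 <= F x y.
Proof. intros Ex. exact (proj2 (epsilon_spec (inhabits 0) _ Ex)). Qed.

Lemma c1lo_le (a b r s al be : R) : 0 <= a -> 0 < Defs.c1 a r s be <= H1 r al ->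
  0 <= H2 s be -> 0 <= al < 1 ->
  forall x y, Defs.c1 a r s be <= x <= H1 r al -> 0 <= y <= H2 s be ->
    c1lo a b r s al be <= fmap r a al x y.
Proof. intros. apply rect_min_le; auto. apply fmap_rect_min_exists; auto. Qed.

Lemma c2lo_le (a b r s al be : R) : 0 <= b -> 0 < Defs.c2 b r s al <= H2 s be ->
  0 <= H1 r al -> 0 <= be < 1 ->
  forall y x, Defs.c2 b r s al <= y <= H2 s be -> 0 <= x <= H1 r al ->
    c2lo a b r s al be <= fmap s b be y x.
Proof.
  intros Hb Hc HH Hbe y x Hy Hx. rewrite <- gmap_fmap.
  apply rect_min_le; auto.
  destruct (fmap_rect_min_exists s b be (Defs.c2 b r s al) (H2 s be) (H1 r al) Hb Hc HH Hbe)
    as [m Hm].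
  exists m. apply (is_rect_min_swap _ _ _ _ _ _ _ (gmap_fmap s b be) Hm).
Qed.

Lemma c1_pos (a r s be : R) : 0 < a -> r > a * s -> s > 2 -> beta_t a r s < be ->
  0 < Defs.c1 a r s be.
Proof.
  intros Ha Hras Hs Hbe. unfold beta_t in Hbe. unfold Defs.c1, H2.
  set (E := exp (s - 1)) in *.
  assert (HE : 2 < E) by (unfold E; pose proof (exp_ineq1_le (s - 1)); lra).
  set (X := (E - r / a) / (E - 2)) in *.
  assert (X < be) by (eapply Rle_lt_trans; [apply Rmax_l|exact Hbe]).
  assert (HX : E - r / a = X * (E - 2)) by (unfold X; field; lra).
  assert (Hra : a * (r / a) = r) by (field; lra).
  assert (X * (E - 2) < be * (E - 2)) by (apply Rmult_lt_compat_r; lra).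
  assert (a * ((1 - be) * E + 2 * be) < a * (r / a)) by (apply Rmult_lt_compat_l; lra).
  apply Rmax_case_strong; intros; lra.
Qed.

Lemma c2_pos (b r s al : R) : 0 < b -> s > b * r -> r > 2 -> alpha_t b r s < al ->
  0 < Defs.c2 b r s al.
Proof. exact (c1_pos b s r al). Qed.

Lemma nat_ind_from (P : nat -> Prop) (N : nat) : P N ->
  (forall n, (N <= n)%nat -> P n -> P (S n)) -> forall n, (N <= n)%nat -> P n.
Proof. intros HN Hs n Hn. induction Hn; auto. Qed.

Lemma uniform_linear_descent (T d W : R) : 0 < d -> exists K : nat,
  forall (w : nat -> R) (N : nat),
  (forall n, (N <= n)%nat -> T < w n -> w (S n) <= w n - d) ->
  (forall n, (N <= n)%nat -> w n <= T -> w (S n) <= T) ->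
  w N <= W -> forall n, (N + K <= n)%nat -> w n <= T.
Proof.
  intros Hd. destruct (INR_unbounded ((W - T) / d)) as [K HK].
  exists K. intros w N Hdec Hstay HW.
  assert (Hb : forall k, w (N + k)%nat <= T \/ w (N + k)%nat <= W - INR k * d).
  { induction k as [|k IH].
    - right. rewrite Nat.add_0_r. simpl. lra.
    - rewrite Nat.add_succ_r.
      destruct (Rle_lt_dec (w (N + k)%nat) T) as [Hle|Hlt].
      + left. apply Hstay; [lia|auto].
      + right. destruct IH as [IH|IH]; [lra|].
        pose proof (Hdec (N + k)%nat ltac:(lia) Hlt). rewrite S_INR. lra. }
  intros n Hn. replace n with (N + (n - N))%nat by lia.
  destruct (Hb (n - N)%nat) as [Hle|Hle]; auto.
  assert (INR K <= INR (n - N)) by (apply le_INR; lia).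
  assert ((W - T) / d * d = W - T) by (field; lra).
  nra.
Qed.

Lemma uniform_linear_ascent (T d W : R) : 0 < d -> exists K : nat,
  forall (w : nat -> R) (N : nat),
  (forall n, (N <= n)%nat -> w n < T -> w n + d <= w (S n)) ->
  (forall n, (N <= n)%nat -> T <= w n -> T <= w (S n)) ->
  W <= w N -> forall n, (N + K <= n)%nat -> T <= w n.
Proof.
  intros Hd. destruct (uniform_linear_descent (- T) d (- W) Hd) as [K HK]. exists K.
  intros w N Hinc Hstay HW n Hn.
  enough (- w n <= - T) by lra.
  apply (HK (fun n => - w n) N); auto; try lra.
  - intros m Hm Hlt. pose proof (Hinc m Hm ltac:(lra)). lra.
  - intros m Hm Hle. pose proof (Hstay m Hm ltac:(lra)). lra.
Qed.

Section DrivenCoordinate.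

Variables (r a al_lo al_hi : R).
Hypotheses (Hr : r > 2) (Ha : 0 < a) (Hal_lo : 0 < al_lo) (Hal : al_lo < al_hi)
  (Hal_hi : al_hi < 1).

Record orbit (al u v : nat -> R) : Prop := {
  orbit_step : forall n, u (S n) = fmap r a (al (S n)) (u n) (v n);
  orbit_rate : forall n, al_lo < al (S n) < al_hi;
  orbit_pos : forall n, 0 < u n;
  orbit_pos_other : forall n, 0 < v n }.

Lemma orbit_ge_geometric (al u v : nat -> R) : orbit al u v ->
  forall n, u O * al_lo ^ n <= u n.
Proof.
  intros [Hst Hrate Hu Hv] n. induction n as [|n IH]; simpl; [lra|].
  rewrite Hst. pose proof (Hrate n). pose proof (Hu n).
  pose proof (fmap_ge_scale r a al_lo (al (S n)) (u n) (v n) ltac:(lra) ltac:(lra) ltac:(lra)).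
  assert (al_lo * (u O * al_lo ^ n) <= al_lo * u n) by (apply Rmult_le_compat_l; lra).
  lra.
Qed.

Lemma orbit_step_le_Rmax (al u v : nat -> R) (n : nat) : orbit al u v ->
  u (S n) <= Rmax (H1 r al_lo) (u n).
Proof.
  intros [Hst Hrate Hu Hv]. rewrite Hst.
  pose proof (Hrate n). pose proof (Hu n). pose proof (Hv n).
  apply fmap_le_Rmax_H1; lra.
Qed.

Lemma orbit_interval_step (V mlo L : R) (al u v : nat -> R) (n : nat) : orbit al u v ->
  (forall x y, r - a * V <= x <= H1 r al_lo -> 0 <= y <= V -> mlo <= fmap r a al_lo x y) ->
  0 <= L <= mlo -> L <= u n <= H1 r al_lo -> v n <= V -> L <= u (S n) <= H1 r al_lo.
Proof.
  intros Hc Hm HL Hun Hvn. split.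
  - destruct Hc as [Hst Hrate Hu Hv]. rewrite Hst.
    pose proof (Hrate n). pose proof (Hv n).
    apply (fmap_ge_of_rect_bound r a al_lo _ (H1 r al_lo) V mlo L _ _ Hm); lra.
  - pose proof (orbit_step_le_Rmax al u v n Hc) as Hle. rewrite Rmax_left in Hle; lra.
Qed.

Lemma orbit_eventually_le (T W : R) : H1 r al_lo < T -> exists K : nat,
  forall al u v, orbit al u v -> u O <= W -> forall n, (K <= n)%nat -> u n <= T.
Proof.
  intros HT.
  pose proof (H1_ge_r r al_lo) as Hr_H1.
  set (q := (1 - al_hi) * exp (r - T) + al_hi).
  pose proof (exp_lt_1 (r - T) ltac:(lra)) as He1. pose proof (exp_pos (r - T)) as He0.
  assert (q < 1) by (unfold q; nra).
  destruct (uniform_linear_descent T ((1 - q) * T) W ltac:(nra)) as [K HK].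
  exists K. intros al u v Hc HW n Hn.
  apply (HK u O); [ | | lra | lia ].
  - intros m _ Hm. destruct Hc as [Hst Hrate Hu Hv]. rewrite Hst.
    pose proof (Hrate m). pose proof (Hv m).
    assert (fmap r a (al (S m)) (u m) (v m) <= q * u m) by (apply fmap_le_contract; lra).
    nra.
  - intros m _ Hm. pose proof (orbit_step_le_Rmax al u v m Hc).
    pose proof (Rmax_lub (H1 r al_lo) (u m) T ltac:(lra) Hm). lra.
Qed.

Lemma orbit_ge_Rmin (V d : R) (N : nat) (al u v : nat -> R) : 2 * d <= r - a * V ->
  orbit al u v -> (forall n, (N <= n)%nat -> v n <= V) ->
  forall n, (N <= n)%nat -> Rmin (u O * al_lo ^ N) (al_lo * d) <= u n.
Proof.
  intros HV Hc HvV. pose proof (orbit_ge_geometric al u v Hc N) as HN.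
  destruct Hc as [Hst Hrate Hu Hv].
  apply nat_ind_from; [pose proof (Rmin_l (u O * al_lo ^ N) (al_lo * d)); lra|].
  intros n Hn IH. rewrite Hst.
  pose proof (Hrate n). pose proof (Hu n). pose proof (Hv n). pose proof (HvV n Hn).
  destruct (Rle_lt_dec (u n) d) as [Hud|Hud].
  - pose proof (fmap_ge_self r a (al (S n)) (u n) (v n) ltac:(lra) ltac:(nra) ltac:(lra)).
    lra.
  - pose proof (fmap_ge_scale r a al_lo (al (S n)) (u n) (v n) ltac:(lra) ltac:(lra) ltac:(lra)).
    pose proof (Rmin_r (u O * al_lo ^ N) (al_lo * d)). nra.
Qed.

Lemma orbit_eventually_le_H1 (T l : R) : 0 < l -> exists K : nat,
  forall al u v N, orbit al u v -> (forall n, (N <= n)%nat -> l <= v n) -> u N <= T ->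
  forall n, (N + K <= n)%nat -> u n <= H1 r al_lo.
Proof.
  intros Hl.
  pose proof (exp_lt_1 (- (a * l)) ltac:(nra)).
  assert (Hd : 0 < r * (1 - al_hi) * (1 - exp (- (a * l)))).
  { apply Rmult_lt_0_compat; [|lra]. apply Rmult_lt_0_compat; lra. }
  destruct (uniform_linear_descent (H1 r al_lo) _ T Hd) as [K HK].
  exists K. intros al u v N Hc Hvl HuT.
  pose proof (H1_ge_r r al_lo) as Hr_H1.
  apply (HK u N); auto.
  - intros m Hm Hlt. destruct Hc as [Hst Hrate Hu Hv]. rewrite Hst.
    pose proof (Hrate m). pose proof (Hvl m Hm).
    apply (fmap_le_decrease r a (al (S m)) al_hi l (u m) (v m)); lra.
  - intros m _ Hm. pose proof (orbit_step_le_Rmax al u v m Hc) as Hle.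
    rewrite Rmax_left in Hle; lra.
Qed.

(* Below mlo - h the exponent is at least h, so the iterate grows at least by the factor
   (1 - al_hi) e^h + al_hi > 1, which is linear growth once the iterate is bounded below. *)
Lemma orbit_eventually_ge (V mlo h l0 : R) :
  (forall x y, r - a * V <= x <= H1 r al_lo -> 0 <= y <= V -> mlo <= fmap r a al_lo x y) ->
  mlo <= r - a * V -> 0 < h < mlo -> 0 < l0 -> exists K : nat,
  forall al u v N, orbit al u v ->
  (forall n, (N <= n)%nat -> u n <= H1 r al_lo /\ v n <= V) -> l0 <= u N ->
  forall n, (N + K <= n)%nat -> mlo - h <= u n.
Proof.
  intros Hm Hmc Hh Hl0.
  set (l := Rmin l0 (mlo - h)).
  assert (Hl : 0 < l) by (apply Rmin_glb_lt; lra).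
  assert (Hll0 : l <= l0) by apply Rmin_l.
  assert (Hlm : l <= mlo - h) by apply Rmin_r.
  pose proof (exp_gt_1 h ltac:(lra)).
  set (kap := (1 - al_hi) * exp h + al_hi).
  assert (Hk : 1 < kap) by (unfold kap; nra).
  destruct (uniform_linear_ascent (mlo - h) ((kap - 1) * l) l ltac:(nra)) as [K HK].
  exists K. intros al u v N Hc Hb HlN.
  assert (Hstay : forall n, (N <= n)%nat -> mlo - h <= u n -> mlo - h <= u (S n)).
  { intros n Hn Hun. destruct (Hb n Hn).
    apply (orbit_interval_step V mlo (mlo - h) al u v n Hc Hm); lra. }
  destruct Hc as [Hst Hrate Hu Hv].
  assert (Hgrow : forall n, (N <= n)%nat -> u n < mlo - h -> kap * u n <= u (S n)).
  { intros n Hn Hun. rewrite Hst. destruct (Hb n Hn).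
    pose proof (Hrate n). pose proof (Hu n). pose proof (Hv n).
    unfold kap. apply fmap_ge_growth; nra. }
  assert (Hlow : forall n, (N <= n)%nat -> l <= u n).
  { apply nat_ind_from; [lra|].
    intros n Hn IH. pose proof (Hu n).
    destruct (Rlt_le_dec (u n) (mlo - h)) as [Hun|Hun].
    - pose proof (Hgrow n Hn Hun). nra.
    - pose proof (Hstay n Hn Hun). lra. }
  apply (HK u N).
  - intros n Hn Hun. pose proof (Hgrow n Hn Hun). pose proof (Hlow n Hn). nra.
  - exact Hstay.
  - apply Hlow; lia.
Qed.

End DrivenCoordinate.

Section Box.

Variables (a b r s al_lo be_lo al_hi be_hi h : R).
Hypotheses (Ha : 0 < a < 1) (Hb : 0 < b < 1) (Hr : r > 2) (Hs : s > 2)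
  (Hras : r > a * s) (Hsbr : s > b * r)
  (Hal : alpha_t b r s < al_lo < 1) (Hbe : beta_t a r s < be_lo < 1)
  (Halh : al_lo < al_hi < 1) (Hbeh : be_lo < be_hi < 1)
  (Hh : 0 < h < Rmin (c1lo a b r s al_lo be_lo) (c2lo a b r s al_lo be_lo)).

Local Notation Hx := (H1 r al_lo).
Local Notation Hy := (H1 s be_lo).
Local Notation mx := (c1lo a b r s al_lo be_lo).
Local Notation my := (c2lo a b r s al_lo be_lo).

Lemma inD_iff (h' x y : R) :
  inD a b r s al_lo be_lo h' x y <-> mx - h' <= x <= Hx /\ my - h' <= y <= Hy.
Proof. reflexivity. Qed.

Lemma al_lo_pos : 0 < al_lo.
Proof.
  pose proof (Rmax_r ((exp (r - 1) - s / b) / (exp (r - 1) - 2)) 0).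
  unfold alpha_t in Hal. lra.
Qed.

Lemma be_lo_pos : 0 < be_lo.
Proof.
  pose proof (Rmax_r ((exp (s - 1) - r / a) / (exp (s - 1) - 2)) 0).
  unfold beta_t in Hbe. lra.
Qed.

Lemma cx_pos : 0 < r - a * Hy.
Proof. exact (c1_pos a r s be_lo (proj1 Ha) Hras Hs (proj1 Hbe)). Qed.

Lemma cy_pos : 0 < s - b * Hx.
Proof. exact (c2_pos b r s al_lo (proj1 Hb) Hsbr Hr (proj1 Hal)). Qed.

Lemma mx_le_fmap (x y : R) : r - a * Hy <= x <= Hx -> 0 <= y <= Hy -> mx <= fmap r a al_lo x y.
Proof.
  intros. pose proof cx_pos as Hcx. pose proof al_lo_pos as Hal0.
  pose proof (H1_ge_r r al_lo) as HrHx. pose proof (H1_ge_r s be_lo) as HsHy.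
  apply c1lo_le; unfold Defs.c1; change (H2 s be_lo) with Hy; nra.
Qed.

Lemma my_le_fmap (y x : R) : s - b * Hx <= y <= Hy -> 0 <= x <= Hx -> my <= fmap s b be_lo y x.
Proof.
  intros. pose proof cy_pos as Hcy. pose proof be_lo_pos as Hbe0.
  pose proof (H1_ge_r r al_lo) as HrHx. pose proof (H1_ge_r s be_lo) as HsHy.
  apply c2lo_le; unfold Defs.c2; change (H2 s be_lo) with Hy; nra.
Qed.

Lemma mx_le_cx : mx <= r - a * Hy.
Proof.
  pose proof cx_pos as Hcx. pose proof (H1_ge_r r al_lo) as HrHx.
  pose proof (H1_ge_r s be_lo) as HsHy.
  rewrite <- (fmap_zero_exponent r a al_lo (r - a * Hy) Hy) by ring.
  apply mx_le_fmap; nra.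
Qed.

Lemma my_le_cy : my <= s - b * Hx.
Proof.
  pose proof cy_pos as Hcy. pose proof (H1_ge_r r al_lo) as HrHx.
  pose proof (H1_ge_r s be_lo) as HsHy.
  rewrite <- (fmap_zero_exponent s b be_lo (s - b * Hx) Hx) by ring.
  apply my_le_fmap; nra.
Qed.

Lemma h_lt_mx : h < mx.
Proof. pose proof (Rmin_l mx my). lra. Qed.

Lemma h_lt_my : h < my.
Proof. pose proof (Rmin_r mx my). lra. Qed.

Lemma solution_orbits (alpha beta x y : nat -> R) :
  admissible_seqs al_lo al_hi be_lo be_hi alpha beta -> is_solution a b r s alpha beta x y ->
  0 < x O -> 0 < y O ->
  orbit r a al_lo al_hi alpha x y /\ orbit s b be_lo be_hi beta y x.
Proof.
  intros Had Hso Hx0 Hy0.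
  assert (Hrate : forall n, al_lo < alpha (S n) < al_hi /\ be_lo < beta (S n) < be_hi)
    by (intros n; apply Had; lia).
  assert (Hpos : forall n, 0 < x n /\ 0 < y n).
  { pose proof al_lo_pos. pose proof be_lo_pos.
    induction n as [|n [Hxn Hyn]]; [auto|].
    destruct (Hso n) as [-> ->]. rewrite gmap_fmap. destruct (Hrate n).
    pose proof (fmap_ge_scale r a al_lo (alpha (S n)) (x n) (y n)).
    pose proof (fmap_ge_scale s b be_lo (beta (S n)) (y n) (x n)).
    split; nra. }
  split; constructor; intro n; try apply Hrate; try apply Hpos.
  - apply Hso.
  - rewrite <- gmap_fmap. apply Hso.
Qed.

Lemma inD_invariant (h' : R) (alpha beta x y : nat -> R) : 0 <= h' <= h ->
  orbit r a al_lo al_hi alpha x y -> orbit s b be_lo be_hi beta y x ->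
  inD a b r s al_lo be_lo h' (x O) (y O) -> forall n, inD a b r s al_lo be_lo h' (x n) (y n).
Proof.
  intros Hh' CX CY H0 n. induction n as [|n IH]; [exact H0|].
  rewrite inD_iff in IH |- *. destruct IH as [HXn HYn].
  pose proof h_lt_mx as Hhx. pose proof h_lt_my as Hhy.
  pose proof al_lo_pos as Hal0. pose proof be_lo_pos as Hbe0.
  split.
  - apply (orbit_interval_step r a al_lo al_hi)
      with (V := Hy) (mlo := mx) (al := alpha) (v := y); auto using mx_le_fmap; lra.
  - apply (orbit_interval_step s b be_lo be_hi)
      with (V := Hx) (mlo := my) (al := beta) (v := x); auto using my_le_fmap; lra.
Qed.

Lemma eventually_le_box (x0 y0 : R) : 0 < x0 -> 0 < y0 -> exists N : nat,
  forall alpha beta x y, orbit r a al_lo al_hi alpha x y -> orbit s b be_lo be_hi beta y x ->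
  x O = x0 -> y O = y0 -> forall n, (N <= n)%nat -> x n <= Hx /\ y n <= Hy.
Proof.
  intros Hx0 Hy0.
  pose proof cx_pos as Hcx. pose proof cy_pos as Hcy.
  pose proof al_lo_pos as Hal0. pose proof be_lo_pos as Hbe0.
  (* Below Tx the y-equation keeps half of the margin s - b Hx, and symmetrically. *)
  set (Tx := Hx + (s - b * Hx) / (2 * b)). set (Ty := Hy + (r - a * Hy) / (2 * a)).
  assert (HTx : s - b * Tx = (s - b * Hx) / 2) by (unfold Tx; field; lra).
  assert (HTy : r - a * Ty = (r - a * Hy) / 2) by (unfold Ty; field; lra).
  assert (HxTx : Hx < Tx) by (unfold Tx; assert (0 < (s - b * Hx) / (2 * b)) by
    (apply Rdiv_lt_0_compat; lra); lra).
  assert (HyTy : Hy < Ty) by (unfold Ty; assert (0 < (r - a * Hy) / (2 * a)) by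
    (apply Rdiv_lt_0_compat; lra); lra).
  destruct (orbit_eventually_le r a al_lo al_hi) with (T := Tx) (W := x0) as [Kx HKx]; try lra.
  destruct (orbit_eventually_le s b be_lo be_hi) with (T := Ty) (W := y0) as [Ky HKy]; try lra.
  set (N := (Kx + Ky)%nat).
  set (lx := Rmin (x0 * al_lo ^ N) (al_lo * ((r - a * Hy) / 4))).
  set (ly := Rmin (y0 * be_lo ^ N) (be_lo * ((s - b * Hx) / 4))).
  assert (Hlx : 0 < lx) by (apply Rmin_glb_lt; apply Rmult_lt_0_compat; try apply pow_lt; lra).
  assert (Hly : 0 < ly) by (apply Rmin_glb_lt; apply Rmult_lt_0_compat; try apply pow_lt; lra).
  destruct (orbit_eventually_le_H1 r a al_lo al_hi) with (T := Tx) (l := ly) as [Lx HLx];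
    try lra.
  destruct (orbit_eventually_le_H1 s b be_lo be_hi) with (T := Ty) (l := lx) as [Ly HLy];
    try lra.
  exists (N + Lx + Ly)%nat.
  intros alpha beta x y CX CY Ex Ey.
  assert (Habove : forall n, (N <= n)%nat -> x n <= Tx /\ y n <= Ty).
  { intros n Hn. split; [apply (HKx alpha x y) | apply (HKy beta y x)]; auto; lra || lia. }
  assert (Hbelow : forall n, (N <= n)%nat -> lx <= x n /\ ly <= y n).
  { intros n Hn. unfold lx, ly. rewrite <- Ex, <- Ey. split.
    - apply (orbit_ge_Rmin r a al_lo al_hi) with (V := Ty) (al := alpha) (v := y);
        auto; try lra.
      intros m Hm. apply Habove, Hm.
    - apply (orbit_ge_Rmin s b be_lo be_hi) with (V := Tx) (al := beta) (v := x);
        auto; try lra.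
      intros m Hm. apply Habove, Hm. }
  intros n Hn. split.
  - apply (HLx alpha x y N); auto; [intros m Hm; apply Hbelow, Hm | apply Habove | lia]; lia.
  - apply (HLy beta y x N); auto; [intros m Hm; apply Hbelow, Hm | apply Habove | lia]; lia.
Qed.

Lemma eventually_in_box (x0 y0 : R) : 0 < x0 -> 0 < y0 -> exists St : nat, (1 <= St)%nat /\
  forall alpha beta x y, orbit r a al_lo al_hi alpha x y -> orbit s b be_lo be_hi beta y x ->
  x O = x0 -> y O = y0 -> forall n, (St <= n)%nat -> inD a b r s al_lo be_lo h (x n) (y n).
Proof.
  intros Hx0 Hy0. destruct (eventually_le_box x0 y0 Hx0 Hy0) as [N HN].
  pose proof al_lo_pos as Hal0. pose proof be_lo_pos as Hbe0.
  pose proof h_lt_mx as Hhx. pose proof h_lt_my as Hhy.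
  pose proof mx_le_cx as Hmx. pose proof my_le_cy as Hmy.
  assert (0 < x0 * al_lo ^ N) by (apply Rmult_lt_0_compat; [|apply pow_lt]; lra).
  assert (0 < y0 * be_lo ^ N) by (apply Rmult_lt_0_compat; [|apply pow_lt]; lra).
  destruct (orbit_eventually_ge r a al_lo al_hi)
    with (V := Hy) (mlo := mx) (h := h) (l0 := x0 * al_lo ^ N) as [Kx HKx];
    auto using mx_le_fmap; try lra.
  destruct (orbit_eventually_ge s b be_lo be_hi)
    with (V := Hx) (mlo := my) (h := h) (l0 := y0 * be_lo ^ N) as [Ky HKy];
    auto using my_le_fmap; try lra.
  exists (N + Kx + Ky + 1)%nat. split; [lia|].
  intros alpha beta x y CX CY Ex Ey n Hn. rewrite inD_iff.
  pose proof (orbit_ge_geometric r a al_lo al_hi Hal0 (proj2 Halh) alpha x y CX N) as GX.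
  pose proof (orbit_ge_geometric s b be_lo be_hi Hbe0 (proj2 Hbeh) beta y x CY N) as GY.
  rewrite Ex in GX. rewrite Ey in GY.
  destruct (HN alpha beta x y CX CY Ex Ey n ltac:(lia)).
  assert (mx - h <= x n).
  { apply (HKx alpha x y N); auto; [|lia].
    intros m Hm. apply (HN alpha beta x y CX CY Ex Ey m Hm). }
  assert (my - h <= y n).
  { apply (HKy beta y x N); auto; [|lia].
    intros m Hm. destruct (HN alpha beta x y CX CY Ex Ey m Hm). auto. }
  lra.
Qed.

End Box.

Theorem mainTheorem4 (a b r s al_lo be_lo al_hi be_hi h : R) :
  0 < a < 1 -> 0 < b < 1 -> r > 2 -> s > 2 -> r > a * s -> s > b * r ->
  alpha_t b r s < al_lo < 1 -> beta_t a r s < be_lo < 1 ->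
  al_lo < al_hi < 1 -> be_lo < be_hi < 1 ->
  0 < h < Rmin (c1lo a b r s al_lo be_lo) (c2lo a b r s al_lo be_lo) ->
  (forall alpha beta x y : nat -> R,
     admissible_seqs al_lo al_hi be_lo be_hi alpha beta ->
     is_solution a b r s alpha beta x y ->
     0 < x O -> 0 < y O ->
     ((inD a b r s al_lo be_lo 0 (x O) (y O) ->
        forall n : nat, (1 <= n)%nat -> inD a b r s al_lo be_lo 0 (x n) (y n)) /\
      (inD a b r s al_lo be_lo h (x O) (y O) ->
        forall n : nat, (1 <= n)%nat -> inD a b r s al_lo be_lo h (x n) (y n)))) /\
  (forall x0 y0 : R, 0 < x0 -> 0 < y0 ->
     ~ inD a b r s al_lo be_lo h x0 y0 ->
     exists St : nat, (1 <= St)%nat /\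
       forall alpha beta x y : nat -> R,
         admissible_seqs al_lo al_hi be_lo be_hi alpha beta ->
         is_solution a b r s alpha beta x y ->
         x O = x0 -> y O = y0 ->
         forall n : nat, (St <= n)%nat -> inD a b r s al_lo be_lo h (x n) (y n)).
Proof.
  intros Ha Hb Hr Hs Hras Hsbr Hal Hbe Halh Hbeh Hh.
  pose proof (solution_orbits a b r s al_lo be_lo al_hi be_hi Hal Hbe Halh Hbeh) as Horbits.
  split.
  - intros alpha beta x y Had Hso Hx0 Hy0.
    destruct (Horbits alpha beta x y Had Hso Hx0 Hy0) as [CX CY].
    split; intros HD n _;
      apply (inD_invariant a b r s al_lo be_lo al_hi be_hi h
               Ha Hb Hr Hs Hras Hsbr Hal Hbe Halh Hbeh Hh _ alpha beta x y); auto; lra.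
  - intros x0 y0 Hx0 Hy0 _.
    destruct (eventually_in_box a b r s al_lo be_lo al_hi be_hi h
                Ha Hb Hr Hs Hras Hsbr Hal Hbe Halh Hbeh Hh x0 y0 Hx0 Hy0) as [St [HSt HD]].
    exists St. split; [exact HSt|].
    intros alpha beta x y Had Hso Ex Ey. subst x0 y0.
    destruct (Horbits alpha beta x y Had Hso Hx0 Hy0) as [CX CY].
    exact (HD alpha beta x y CX CY eq_refl eq_refl).
Qed.
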